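(* For every integer $n\ge 1$, $$\Phi^{(4)}[aq^n; b; c, c'; x, y] = \Phi^{(4)}[a; b; c, c'; x, y] + \frac{ax(1-b)}{1-c} \sum_{k=1}^n q^{k-1} \Phi^{(4)}[aq^k; bq; cq, c'; x, y] + \frac{ay(1-b)}{1-c'} \sum_{k=1}^n q^{k-1} \Phi^{(4)}[aq^k; bq; c, c'q; xq, y]$$ and $$\Phi^{(4)}[aq^{-n}; b; c, c'; x, y] = \Phi^{(4)}[a; b; c, c'; x, y] - \frac{ax(1-b)}{1-c} \sum_{k=1}^n q^{-k} \Phi^{(4)}[aq^{1-k}; bq; cq, c'; x, y] - \frac{ay(1-b)}{1-c'} \sum_{k=1}^n q^{-k} \Phi^{(4)}[aq^{1-k}; bq; c, c'q; xq, y].$$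
   Context: Let $q$ be a complex number with $0<|q|<1$. For complex $z$ and integer $m\ge 0$, $(z;q)_m=\prod_{j=0}^{m-1}(1-zq^j)$, with $(z;q)_0=1$. The $q$-Appell function $\Phi^{(4)}$ is $$\Phi^{(4)}[a; b; c, c'; x, y] = \sum_{m, n \geq 0} \frac{(a; q)_{m+n} (b; q)_{m+n}}{(q; q)_m (q; q)_n (c; q)_m (c'; q)_n} x^m y^n.$$ Identities are understood as identities of power series in $x,y$ (formal, or convergent for small $|x|,|y|$), with complex parameters chosen so that no denominator occurring vanishes. *)

From HB Require Import structures.
From mathcomp Require Import all_boot all_order all_algebra.
From mathcomp Require Import reals complex.
Set Implicit Arguments. Unset Strict Implicit. Unset Printing Implicit Defensive.
Import Order.TTheory GRing.Theory Num.Theory.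
Local Open Scope ring_scope.

Definition qpoch {F : fieldType} (z q : F) (m : nat) : F :=
  \prod_(j < m) (1 - z * q ^+ j).

(* A formal double power series in x, y: its coefficient of x^m y^n. *)
Definition fps (F : Type) := nat -> nat -> F.

Definition Phi4 {F : fieldType} (q a b c c' : F) : fps F :=
  fun m n => qpoch a q (m + n) * qpoch b q (m + n) /
             (qpoch q q m * qpoch q q n * qpoch c q m * qpoch c' q n).

(* x * S *)
Definition xmul {F : fieldType} (S : fps F) : fps F :=
  fun m n => if m is m'.+1 then S m' n else 0.
(* y * S *)
Definition ymul {F : fieldType} (S : fps F) : fps F :=
  fun m n => if n is n'.+1 then S m n' else 0.
(* S(xq, y) *)
Definition xdil {F : fieldType} (q : F) (S : fps F) : fps F :=
  fun m n => q ^+ m * S m n.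

(* Comparing coefficients of x^m y^n, the one-step relation
     Phi[aq] = Phi[a] + a(1-b)/(1-c) x Phi[aq; bq; cq, c']
                      + a(1-b)/(1-c') y Phi[aq; bq; c, c'q](xq, y)
   is a rational identity between q-Pochhammer symbols, once (a;q)_{N+1} is
   peeled on the left for a and on the right for aq.  Applied along
   a, aq, ..., aq^n (resp. aq^-n, ..., a) it telescopes into both identities. *)
From HB Require Import structures.
From mathcomp Require Import all_boot all_order all_algebra.
From mathcomp Require Import reals complex.
From mathcomp Require Import ring.
Import Order.TTheory GRing.Theory Num.Theory.
Local Open Scope ring_scope.

Section QPochhammer.
Context {F : fieldType}.
Implicit Types z q : F.

Lemma qpoch0 z q : qpoch z q 0 = 1.
Proof. by rewrite /qpoch big_ord0. Qed.

Lemma qpochS z q N : qpoch z q N.+1 = (1 - z) * qpoch (z * q) q N.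
Proof.
rewrite /qpoch big_ord_recl expr0 mulr1; congr (_ * _).
by apply: eq_bigr => j _; rewrite lift0 exprS mulrA.
Qed.

Lemma qpochSr z q N : qpoch z q N.+1 = qpoch z q N * (1 - z * q ^+ N).
Proof. by rewrite /qpoch big_ord_recr. Qed.

Lemma qpoch_neq0 {z q} N : (forall j, z * q ^+ j != 1) -> qpoch z q N != 0.
Proof.
by move=> zq_neq1; apply/prodf_neq0 => j _; rewrite subr_eq0 eq_sym.
Qed.

Lemma subr1_qpow_neq0 {z q} : (forall j, z * q ^+ j != 1) -> 1 - z != 0.
Proof. by move=> zq_neq1; rewrite subr_eq0 eq_sym -[z]mulr1 -(expr0 q). Qed.

Lemma qpow_neq1_mulq {z q} :
  (forall j, z * q ^+ j != 1) -> forall j, z * q * q ^+ j != 1.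
Proof. by move=> zq_neq1 j; rewrite -mulrA -exprS. Qed.

End QPochhammer.

Section Contiguous.
Context {F : fieldType} {q b c c' : F}.
Hypotheses (hq : forall j, q * q ^+ j != 1) (hc : forall j, c * q ^+ j != 1)
  (hc' : forall j, c' * q ^+ j != 1).

Lemma Phi4_contiguous a i j :
  Phi4 q (a * q) b c c' i j = Phi4 q a b c c' i j
   + a * (1 - b) / (1 - c) * xmul (Phi4 q (a * q) (b * q) (c * q) c') i j
   + a * (1 - b) / (1 - c') * ymul (xdil q (Phi4 q (a * q) (b * q) c (c' * q))) i j.
Proof.
have qq_neq0 N := qpoch_neq0 N hq.
have cq_neq0 N := qpoch_neq0 N (qpow_neq1_mulq hc).
have c'q_neq0 N := qpoch_neq0 N (qpow_neq1_mulq hc').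
have c_neq1 := subr1_qpow_neq0 hc; have c'_neq1 := subr1_qpow_neq0 hc'.
have qS_neq1 m : 1 - q * q ^+ m != 0 by rewrite subr_eq0 eq_sym.
rewrite /xmul /ymul /xdil /Phi4.
case: i => [|m]; case: j => [|n]; first by rewrite addn0 !qpoch0 !mulr0 !addr0.
all: rewrite ?add0n ?addn0 ?addSn ?addnS ?qpoch0 (qpochS a) (qpochSr (a * q)).
all: rewrite (qpochS b) ?(qpochS c) ?(qpochS c') !(qpochSr q q) ?expr0 ?exprS ?exprD.
all: by field; rewrite ?qq_neq0 ?cq_neq0 ?c'q_neq0 ?c_neq1 ?c'_neq1 ?qS_neq1.
Qed.

End Contiguous.

Section QShiftTelescope.
Context {R : comUnitRingType} {q u v : R} {f g h : R -> R}.
Hypothesis f_mulq :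
  forall z, f (z * q) = f z + z * u * g (z * q) + z * v * h (z * q).

Lemma telescope_qshift_up a n :
  f (a * q ^+ n) = f a
    + a * u * \sum_(1 <= k < n.+1) q ^+ (k - 1) * g (a * q ^+ k)
    + a * v * \sum_(1 <= k < n.+1) q ^+ (k - 1) * h (a * q ^+ k).
Proof.
elim: n => [|n IHn]; first by rewrite !big_geq // expr0 mulr1 !mulr0 !addr0.
rewrite !(big_nat_recr n.+1) //= subn1 /= exprSr mulrA f_mulq IHn.
ring.
Qed.

Lemma telescope_qshift_down (q_unit : q \is a GRing.unit) a n :
  f (a * q ^- n) = f a
    - a * u * \sum_(1 <= k < n.+1) q ^- k * g (a * q ^- (k - 1))
    - a * v * \sum_(1 <= k < n.+1) q ^- k * h (a * q ^- (k - 1)).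
Proof.
elim: n => [|n IHn]; first by rewrite !big_geq // expr0 invr1 mulr1 !mulr0 !subr0.
have f_divq z : f z = f (z * q) - z * u * g (z * q) - z * v * h (z * q).
  by rewrite f_mulq; ring.
have a_qS : a * q ^- n.+1 * q = a * q ^- n.
  by rewrite exprSr invrM ?unitrX // [_^-1 * _]mulrC mulrA divrK.
rewrite !(big_nat_recr n.+1) //= subn1 /= (f_divq (a * q ^- n.+1)) a_qS IHn.
ring.
Qed.

End QShiftTelescope.

Lemma qpow_neq1 {C : numDomainType} {q : C} : `|q| < 1 -> forall j, q * q ^+ j != 1.
Proof.
move=> q_lt1 j; apply/eqP => /(congr1 Num.norm).
by rewrite -exprS normrX normr1 => /eqP; rewrite lt_eqF // exprn_ilt1.
Qed.

Theorem theorem14 (R : realType) (q a b c c' : R[i])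
  (hq0 : 0 < `|q|) (hq1 : `|q| < 1)
  (hc : forall j : nat, c * q ^+ j != 1)
  (hc' : forall j : nat, c' * q ^+ j != 1)
  (n : nat) (hn : (1 <= n)%N) :
  (forall i j : nat,
    Phi4 q (a * q ^+ n) b c c' i j =
      Phi4 q a b c c' i j
      + a * (1 - b) / (1 - c) *
          \sum_(1 <= k < n.+1)
             q ^+ (k - 1) * xmul (Phi4 q (a * q ^+ k) (b * q) (c * q) c') i j
      + a * (1 - b) / (1 - c') *
          \sum_(1 <= k < n.+1)
             q ^+ (k - 1) *
               ymul (xdil q (Phi4 q (a * q ^+ k) (b * q) c (c' * q))) i j)
  /\
  (forall i j : nat,
    Phi4 q (a * q ^- n) b c c' i j =
      Phi4 q a b c c' i j
      - a * (1 - b) / (1 - c) *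
          \sum_(1 <= k < n.+1)
             q ^- k * xmul (Phi4 q (a * q ^- (k - 1)) (b * q) (c * q) c') i j
      - a * (1 - b) / (1 - c') *
          \sum_(1 <= k < n.+1)
             q ^- k *
               ymul (xdil q (Phi4 q (a * q ^- (k - 1)) (b * q) c (c' * q))) i j).
Proof.
have q_unit : q \is a GRing.unit by rewrite unitfE -normr_gt0.
pose f i j z := Phi4 q z b c c' i j.
pose g i j z := xmul (Phi4 q z (b * q) (c * q) c') i j.
pose h i j z := ymul (xdil q (Phi4 q z (b * q) c (c' * q))) i j.
have f_mulq i j z : f i j (z * q) = f i j z
    + z * ((1 - b) / (1 - c)) * g i j (z * q)
    + z * ((1 - b) / (1 - c')) * h i j (z * q).
  by rewrite !mulrA; exact: Phi4_contiguous (qpow_neq1 hq1) hc hc' z i j.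
rewrite -!(mulrA a (1 - b)); split=> i j.
- exact: telescope_qshift_up (f_mulq i j) a n.
- exact: telescope_qshift_down (f_mulq i j) q_unit a n.
Qed.
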